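(* (a) For all $x\ge0$: $x^2=-\frac16[\sigma(x+2)-4\sigma(x+1)+3\sigma(x)-4]$ and $x=-\frac1{12}[\sigma(x+3)-5\sigma(x+2)+7\sigma(x+1)-3\sigma(x)+6]$, and for all $x,y\ge0$: $xy=-\frac1{12}[\sigma(x+y+2)-4\sigma(x+y+1)+3\sigma(x+y)-\sigma(x+2)+4\sigma(x+1)-3\sigma(x)-\sigma(y+2)+4\sigma(y+1)-3\sigma(y)+4]$, where $\sigma=\mathrm{ReLU}^3$. (b) Consequently, for every $\ell\in\mathbb N_+$ and $\mathbf i\in I^d$, the restriction of the multivariate B-spline $N^{(4)}_{\ell,\mathbf i}$ to $[0,1]^d$ is implemented exactly by a network with activations in $\{\mathrm{ReLU}^3\}$ of depth $\lceil\log_2 d\rceil+2$ and width at most $11d$.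
   Context: $\mathrm{ReLU}^3(x)=(\max\{x,0\})^3$. B-splines of order $k=4$: knots $t_{-3}=\dots=t_0=0$, $t_i=i/\ell$ ($0\le i\le\ell$), $t_\ell=\dots=t_{\ell+3}=1$; for $i\in I=\{-3,\dots,\ell-1\}$, $N^{(4)}_{\ell,i}(x)=(t_{i+4}-t_i)[t_i,\dots,t_{i+4}](x-t)_+^{3}$ (divided difference in $t$), $x\in[0,1]$, continuously modified at $x=1$; these are nonnegative $C^2$ piecewise cubics, each a linear combination of $(x-j/\ell)_+^3$ ($0\le j\le\ell$), $x^2$, $x$ and $1$ on $[0,1]$. Multivariate: $N^{(4)}_{\ell,\mathbf i}(\mathbf x)=\prod_{j=1}^dN^{(4)}_{\ell,i_j}(x_j)$. A network of depth $\mathcal D$, width $\mathcal W$, activations in $\Phi$ computes $f_0=x$, $(f_\ell)_i=\rho^{(\ell)}_i((A_\ell f_{\ell-1}+b_\ell)_i)$ for $\ell=1,\dots,\mathcal D-1$ ($\rho^{(\ell)}_i\in\Phi$), output $A_{\mathcal D}f_{\mathcal D-1}+b_{\mathcal D}$, with all layer sizes $\le\mathcal W$. *)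

From HB Require Import structures.
From mathcomp Require Import all_boot all_order all_algebra.
From mathcomp Require Import all_classical all_reals all_analysis.
Set Implicit Arguments. Unset Strict Implicit. Unset Printing Implicit Defensive.
Import Order.TTheory GRing.Theory Num.Theory.
Import numFieldNormedType.Exports.
Local Open Scope ring_scope.

Section Defs.
Variable R : realType.

Definition relu3 (x : R) : R := (Num.max x 0) ^+ 3.

Definition knot (l : nat) (j : int) : R :=
  if (j <= 0)%R then 0 else if (l%:Z <= j)%R then 1 else j%:~R / l%:R.

(* divided difference [t_a, ..., t_{a+n}] g for a nondecreasing knot sequence
   t, with the usual confluent convention g^(n)(t_a)/n! when t_a = t_{a+n}. *)
Fixpoint divdiff (g : R -> R) (t : int -> R) (a : int) (n : nat) : R :=
  match n with
  | 0 => g (t a)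
  | n'.+1 =>
      if t (a + n%:Z) == t a then derive1n n g (t a) / (n`!)%:R
      else (divdiff g t (a + 1) n' - divdiff g t a n') / (t (a + n%:Z) - t a)
  end.

Definition bspline4_raw (l : nat) (i : int) (x : R) : R :=
  (knot l (i + 4) - knot l i) * divdiff (fun t => relu3 (x - t)) (knot l) i 4.

(* on [0,1]: raw formula on (0,1), continuously extended at the endpoints *)
Definition bspline4 (l : nat) (i : int) (x : R) : R :=
  if x == 0 then lim ((bspline4_raw l i) @ at_right 0)%classic
  else if x == 1 then lim ((bspline4_raw l i) @ at_left 1)%classic
  else bspline4_raw l i x.

Definition bspline4_multi (d l : nat) (ii : 'I_d -> int) (x : 'I_d -> R) : R :=
  \prod_(j < d) bspline4 l (ii j) (x j).

Inductive net : nat -> nat -> Type :=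
| Out (n m : nat) (A : 'M[R]_(m, n)) (b : 'cV[R]_m) : net n m
| Hidden (n k m : nat) (A : 'M[R]_(k, n)) (b : 'cV[R]_k)
    (rho : 'I_k -> R -> R) (rest : net k m) : net n m.

Fixpoint net_eval n m (N : net n m) : 'cV[R]_n -> 'cV[R]_m :=
  match N with
  | Out _ _ A b => fun x => A *m x + b
  | Hidden _ k _ A b rho rest =>
      fun x => net_eval rest (\col_i rho i ((A *m x + b) i 0))
  end.

Fixpoint net_depth n m (N : net n m) : nat :=
  match N with
  | Out _ _ _ _ => 1
  | Hidden _ _ _ _ _ _ rest => (net_depth rest).+1
  end.

Fixpoint net_width_le (W : nat) n m (N : net n m) : Prop :=
  match N with
  | Out n m _ _ => (n <= W)%N /\ (m <= W)%N
  | Hidden n _ _ _ _ _ rest => (n <= W)%N /\ net_width_le W rest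
  end.

Fixpoint net_acts_in (Phi : (R -> R) -> Prop) n m (N : net n m) : Prop :=
  match N with
  | Out _ _ _ _ => True
  | Hidden _ _ _ _ _ rho rest => (forall i, Phi (rho i)) /\ net_acts_in Phi rest
  end.

End Defs.

From HB Require Import structures.
From mathcomp Require Import all_boot all_order all_algebra.
From mathcomp Require Import all_classical all_reals all_analysis.
From mathcomp Require Import ring lra zify.
Set Implicit Arguments. Unset Strict Implicit. Unset Printing Implicit Defensive.
Import Order.TTheory GRing.Theory Num.Theory.
Import numFieldNormedType.Exports.
Local Open Scope ring_scope.

(* Part (a): on [0, +oo) the activation sigma = ReLU^3 is the cube, so the three
   identities are polynomial identities between shifted cubes.

   Part (b) combines three facts.
   1. Products: since sigma z - sigma (-z) = z^3 for every real z, the product of two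
      arbitrary reals is a fixed combination of eight neurons sigma (+-(a +- b +- 1))
      (relu3_product).  A layer of 8d such neurons multiplies the d coordinates of
      its input in neighbouring pairs, so ceil(log2 d) layers multiply all of them
      (product_net, evaluating a binary product tree padded with ones).
   2. Spline forms: on (0, 1) the divided difference [t_i, ..., t_(i+4)] (x - .)^3_+
      is a combination of the five truncated powers sigma (x - t_(i+m)) and a cubic
      in x (divdiff_spline_form, by induction on the order; knots only coincide at 0
      and 1, where the confluent divided difference is a cubic, resp. zero).  By
      continuity the same holds for N_(l,i) on [0, 1] (bspline4_spline_form).
   3. A spline form is computed on [0, +oo) by nine neurons: the five truncated
      powers and sigma (x + n), n < 4, which span the cubics (spline_form_relu3).
   The network is one layer of 9d neurons evaluating the d univariate B-splines
   followed by the product tree; each affine output map is folded into the next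
   layer, giving depth ceil(log2 d) + 2 and width 9d. *)

Section ReLU3.
Variable R : realType.
Implicit Types x : R.

Lemma relu3_ge0 x : 0 <= x -> relu3 x = x ^+ 3.
Proof. by move=> hx; rewrite /relu3 max_l. Qed.

Lemma relu3_le0 x : x <= 0 -> relu3 x = 0.
Proof. by move=> hx; rewrite /relu3 max_r // expr0n. Qed.

Lemma relu3N x : relu3 (- x) = relu3 x - x ^+ 3.
Proof.
case: (lerP 0 x) => hx.
  by rewrite (relu3_ge0 hx) relu3_le0 ?subrr // oppr_le0.
by rewrite (relu3_le0 (ltW hx)) relu3_ge0 ?oppr_ge0 ?ltW // sub0r exprNn; ring.
Qed.

Lemma continuous_relu3 : continuous (@relu3 R).
Proof.
move=> y; apply: (@continuous_comp _ _ _ (fun z : R => Num.max z 0) (fun z => z ^+ 3)).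
  by apply: (@continuous_max _ _ id (cst 0)); [exact: cvg_id | exact: cvg_cst].
exact: exprn_continuous.
Qed.

End ReLU3.

Section BigopFacts.

Lemma sum_block (V : nmodType) (m d : nat) (F : nat -> V) :
  \sum_(k < m * d) F k = \sum_(q < m) \sum_(j < d) F (q * d + j)%N.
Proof.
elim: m => [|m IH]; first by rewrite mul0n !big_ord0.
rewrite mulSnr -(big_mkord xpredT) (@big_cat_nat _ _ _ (m * d)) //=; last lia.
rewrite big_mkord IH big_ord_recr /=; congr (_ + _).
rewrite -{1}(add0n (m * d)%N) big_addn addKn big_mkord.
by apply: eq_bigr => j _; rewrite addnC.
Qed.

Lemma sum_indicator (S : pzSemiRingType) (d : nat) (g : nat -> S) (n : nat) :
  \sum_(j < d) ((j : nat) == n)%:R * g j = if (n < d)%N then g n else 0.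
Proof.
case: ltnP => hn.
  rewrite (bigD1 (Ordinal hn)) //= eqxx mul1r big1 ?addr0 // => j hj.
  suff /negbTE -> : (j : nat) != n by rewrite mul0r.
  by apply: contra hj => /eqP hj; apply/eqP/val_inj.
rewrite big1 // => j _; suff /negbTE -> : (j : nat) != n by rewrite mul0r.
by apply: contraTneq (ltn_ord j) => ->; rewrite -leqNgt.
Qed.

Lemma sum_block_at (S : pzSemiRingType) (m d : nat) (F : nat -> nat -> S)
    (s : nat) : (s < d)%N ->
  \sum_(k < m * d) ((k %% d)%N == s)%:R * F (k %/ d)%N (k %% d)%N = \sum_(q < m) F q s.
Proof.
move=> hs; rewrite (@sum_block _ m d (fun k => ((k %% d)%N == s)%:R * F (k %/ d)%N (k %% d)%N)).
have hd : (0 < d)%N by apply: leq_ltn_trans hs.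
apply: eq_bigr => q _.
under eq_bigr => j _ do rewrite divnMDl // modnMDl divn_small // modn_small // addn0.
by rewrite (@sum_indicator _ d (F q)) hs.
Qed.

End BigopFacts.

Section Part_a.
Variable R : realType.
Implicit Types x y : R.

Let nat6_neq0 : (6%:R : R) != 0. Proof. by rewrite pnatr_eq0. Qed.
Let nat12_neq0 : (12%:R : R) != 0. Proof. by rewrite pnatr_eq0. Qed.

Lemma relu3_square x : 0 <= x ->
  x ^+ 2 = - (6%:R)^-1 * (relu3 (x + 2) - 4%:R * relu3 (x + 1)
                          + 3%:R * relu3 x - 4%:R).
Proof. by move=> hx; rewrite !relu3_ge0; [field | lra ..]. Qed.

Lemma relu3_identity x : 0 <= x ->
  x = - (12%:R)^-1 * (relu3 (x + 3) - 5%:R * relu3 (x + 2)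
                      + 7%:R * relu3 (x + 1) - 3%:R * relu3 x + 6%:R).
Proof. by move=> hx; rewrite !relu3_ge0; [field | lra ..]. Qed.

Lemma relu3_product_nonneg x y : 0 <= x -> 0 <= y ->
  x * y = - (12%:R)^-1 *
    (relu3 (x + y + 2) - 4%:R * relu3 (x + y + 1) + 3%:R * relu3 (x + y)
     - relu3 (x + 2) + 4%:R * relu3 (x + 1) - 3%:R * relu3 x
     - relu3 (y + 2) + 4%:R * relu3 (y + 1) - 3%:R * relu3 y + 4%:R).
Proof. by move=> hx hy; rewrite !relu3_ge0; [field | lra ..]. Qed.

End Part_a.

Section ProductTree.
Variable S : comPzSemiRingType.
Implicit Types v : nat -> S.

Definition pad1 (d : nat) v (n : nat) : S := if (n < d)%N then v n else 1.

Fixpoint tree_prod (d e : nat) v : S :=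
  match e with
  | 0 => pad1 d v 0
  | e'.+1 => tree_prod d e' (fun n => pad1 d v n.*2 * pad1 d v n.*2.+1)
  end.

Lemma prod_pairs v (n : nat) :
  \prod_(0 <= j < n) (v j.*2 * v j.*2.+1) = \prod_(0 <= j < n.*2) v j.
Proof.
elim: n => [|n IH]; first by rewrite !big_geq.
by rewrite big_nat_recr //= IH doubleS !big_nat_recr //= mulrA.
Qed.

Lemma tree_prodE d e v : tree_prod d e v = \prod_(0 <= j < 2 ^ e) pad1 d v j.
Proof.
elim: e v => [|e IH] v /=; first by rewrite expn0 big_nat1.
rewrite IH expnS mul2n -prod_pairs; apply: eq_bigr => j _.
rewrite {1}/pad1; case: ltnP => // hj.
by rewrite /pad1 !ifF ?mulr1 //; apply/negbTE; rewrite -leqNgt; lia.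
Qed.

Lemma tree_prod_full d e v : (d <= 2 ^ e)%N -> tree_prod d e v = \prod_(j < d) v j.
Proof.
move=> hd; rewrite tree_prodE (@big_cat_nat _ _ _ d) //=.
have -> : \prod_(d <= j < 2 ^ e) pad1 d v j = 1.
  rewrite big_nat_cond big1 // => j /andP[/andP[hj _] _].
  by rewrite /pad1 ifF //; apply/negbTE; rewrite -leqNgt.
rewrite mulr1 -(big_mkord xpredT); apply: eq_big_nat => j /andP[_ hj].
by rewrite /pad1 hj.
Qed.

End ProductTree.

Section ProductGadget.
Variable R : realType.

(* Product neuron q < 8 is  sigma (sign q * (a + mix q * b + shift q)). *)
Definition prod_sign (q : nat) : R := if odd q then -1 else 1.
Definition prod_mix (q : nat) : R := if (q < 4)%N then 1 else -1.
Definition prod_shift (q : nat) : R := if (q %% 4 < 2)%N then 1 else -1.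
Definition prod_weight (q : nat) : R :=
  prod_sign q * prod_mix q * prod_shift q / 24%:R.

(* Exact multiplication of two arbitrary reals by eight ReLU^3 neurons: neurons
   2r and 2r+1 combine through relu3N into a cube, and
   (1/24) * sum_(s, u = +-1) s * u * (a + s * b + u)^3 = a * b. *)
Lemma relu3_product a b :
  \sum_(q < 8) prod_weight q *
     relu3 (prod_sign q * (a + prod_mix q * b + prod_shift q)) = a * b.
Proof.
rewrite !big_ord_recr big_ord0 /= /prod_weight /prod_sign /prod_mix /prod_shift /=.
rewrite !mulN1r !mul1r !relu3N.
have n24 : (24%:R : R) != 0 by rewrite pnatr_eq0.
by field.
Qed.

End ProductGadget.

Section ProductLayer.
Variable R : realType.
Variable d : nat.

(* The 8d neurons of a product layer: neuron q * d + s computes the q-th product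
   neuron for the pair (w_{2s}, w_{2s+1}) of the input w padded with ones. *)
Definition prod_in : 'M[R]_(8 * d, d) :=
  \matrix_(k, j) (prod_sign R (k %/ d) * (((j : nat) == (k %% d).*2)%:R
                    + prod_mix R (k %/ d) * ((j : nat) == (k %% d).*2.+1)%:R)).

Definition prod_in_bias : 'cV[R]_(8 * d) :=
  \col_k (prod_sign R (k %/ d) * ((d <= (k %% d).*2)%N%:R
          + prod_mix R (k %/ d) * (d <= (k %% d).*2.+1)%N%:R + prod_shift R (k %/ d))).

Definition prod_out : 'M[R]_(d, 8 * d) :=
  \matrix_(s, k) (((k %% d)%N == s)%:R * prod_weight R (k %/ d)).

Lemma pad1_split (v : nat -> R) n :
  pad1 d v n = (if (n < d)%N then v n else 0) + (d <= n)%N%:R.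
Proof. by rewrite /pad1; case: ltnP => _; rewrite ?addr0 ?add0r. Qed.

Lemma prod_layer_input (c : 'cV[R]_d) (v : nat -> R) :
  (forall s : 'I_d, c s 0 = v s) -> forall k : 'I_(8 * d),
  (prod_in *m c + prod_in_bias) k 0 =
  prod_sign R (k %/ d) * (pad1 d v (k %% d).*2
     + prod_mix R (k %/ d) * pad1 d v (k %% d).*2.+1 + prod_shift R (k %/ d)).
Proof.
move=> hc k; rewrite !mxE.
have E (j : 'I_d) : prod_in k j * c j 0 =
    prod_sign R (k %/ d) * (((j : nat) == (k %% d).*2)%:R * v j)
    + prod_sign R (k %/ d) * prod_mix R (k %/ d) * (((j : nat) == (k %% d).*2.+1)%:R * v j).
  by rewrite /prod_in mxE hc; ring.
rewrite (eq_bigr _ (fun j _ => E j)) big_split /= -!mulr_sumr !(@sum_indicator _ d).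
by rewrite !pad1_split; case: ltnP => _; case: ltnP => _; ring.
Qed.

Lemma prod_layer (c : 'cV[R]_d) (v : nat -> R) :
  (forall s : 'I_d, c s 0 = v s) -> forall s : 'I_d,
  (prod_out *m \col_k relu3 ((prod_in *m c + prod_in_bias) k 0)) s 0
   = pad1 d v (s : nat).*2 * pad1 d v (s : nat).*2.+1.
Proof.
move=> hc s; rewrite mxE -relu3_product.
under eq_bigr => k _ do rewrite [in X in _ * X]mxE (prod_layer_input hc) /prod_out mxE -mulrA.
by rewrite (@sum_block_at _ 8 d (fun q j => prod_weight R q * relu3 (prod_sign R q *
  (pad1 d v j.*2 + prod_mix R q * pad1 d v j.*2.+1 + prod_shift R q)))) //.
Qed.

End ProductLayer.

Section ProductNet.
Variable R : realType.

(* Each affine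
   output map is folded into the input map of the next layer. *)
Fixpoint product_net (d' e : nat) :
    forall K, 'M[R]_(d'.+1, K) -> 'cV[R]_(d'.+1) -> net R K 1 :=
  match e with
  | 0 => fun K D bD => Out (\matrix_(a < 1, k < K) D ord0 k) (\col_(a < 1) bD ord0 0)
  | e'.+1 => fun K D bD =>
      Hidden (prod_in R d'.+1 *m D) (prod_in R d'.+1 *m bD + prod_in_bias R d'.+1)
        (fun _ => @relu3 R) (@product_net d' e' _ (prod_out R d'.+1) 0)
  end.
Arguments product_net d' e {K}.

Lemma product_net_eval d' e K (D : 'M[R]_(d'.+1, K)) bD (y : 'cV[R]_K) (v : nat -> R) :
  (forall s : 'I_d'.+1, (D *m y + bD) s 0 = v s) ->
  net_eval (product_net d' e D bD) y 0 0 = tree_prod d'.+1 e v.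
Proof.
elim: e K D bD y v => [|e IH] K D bD y v hv /=.
  rewrite /pad1 /= -(hv ord0) !mxE; congr (_ + _).
  by apply: eq_bigr => k _; rewrite !mxE.
apply: IH => s; rewrite addr0.
have -> : prod_in R d'.+1 *m D *m y + (prod_in R d'.+1 *m bD + prod_in_bias R d'.+1)
        = prod_in R d'.+1 *m (D *m y + bD) + prod_in_bias R d'.+1.
  by rewrite mulmxDr mulmxA addrA.
exact: prod_layer hv s.
Qed.

Lemma product_net_depth d' e K (D : 'M[R]_(d'.+1, K)) bD :
  net_depth (product_net d' e D bD) = e.+1.
Proof. by elim: e K D bD => [|e IH] K D bD //=; rewrite IH. Qed.

Lemma product_net_width d' e W K (D : 'M[R]_(d'.+1, K)) bD :
  (K <= W)%N -> (8 * d'.+1 <= W)%N -> (1 <= W)%N ->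
  net_width_le W (product_net d' e D bD).
Proof. by elim: e K D bD => [|e IH] K D bD hK h8 h1 //=; split => //; apply: IH. Qed.

Lemma product_net_acts d' e K (D : 'M[R]_(d'.+1, K)) bD :
  net_acts_in (fun rho => rho = @relu3 R) (product_net d' e D bD).
Proof. by elim: e K D bD => [|e IH] K D bD //=; split. Qed.

End ProductNet.
Arguments product_net {R} d' e {K}.

Section SplineForm.
Variable R : realType.
Variable l : nat.
Hypothesis l_gt0 : (0 < l)%N.
Implicit Types (i a : int) (c p : nat -> R) (x : R).

Lemma knot_confluent a (n : nat) : (0 < n)%N ->
  knot R l (a + n%:Z) = knot R l a -> knot R l a = 0 \/ knot R l a = 1.
Proof.
move=> hn; rewrite /knot.
case: (lerP a 0) => ha; first by left.
case: (lerP (l%:Z) a) => hla; first by right.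
have hL : (0 : R) < l%:R by rewrite ltr0n.
have han : ~~ (a + n%:Z <= 0) by rewrite -ltNge; apply: ltr_wpDr.
rewrite (negbTE han) => E; exfalso.
have hal : (a%:~R : R) < l%:R by rewrite -[l%:R]/((l%:Z)%:~R : R) ltr_int.
case: (lerP (l%:Z) (a + n%:Z)) E => _ E.
  move: E => /(congr1 (fun z => z * l%:R)); rewrite mul1r divfK ?gt_eqF // => E.
  by move: hal; rewrite -E ltxx.
move: E => /(congr1 (fun z => z * l%:R)); rewrite !divfK ?gt_eqF //.
move/eqP; rewrite intrD -subr_eq0 addrAC subrr add0r pnatr_eq0 => /eqP hn0.
by move: hn; rewrite hn0.
Qed.

Definition spline_form i c p x : R :=
  \sum_(m < 5) c m * relu3 (x - knot R l (i + (m : nat)%:Z))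
  + \sum_(k < 4) p k * x ^+ k.

Lemma spline_formD i c1 p1 c2 p2 (a b : R) x :
  spline_form i (fun m => a * c1 m + b * c2 m) (fun k => a * p1 k + b * p2 k) x
  = a * spline_form i c1 p1 x + b * spline_form i c2 p2 x.
Proof.
rewrite /spline_form !mulrDr !mulr_sumr addrACA -!big_split /=.
by congr (_ + _); apply: eq_bigr => m _; ring.
Qed.

Lemma spline_formZ i c p (a : R) x :
  spline_form i (fun m => a * c m) (fun k => a * p k) x = a * spline_form i c p x.
Proof.
rewrite /spline_form mulrDr !mulr_sumr.
by congr (_ + _); apply: eq_bigr => m _; rewrite mulrA.
Qed.

Lemma spline_form_knot i (m0 : nat) x : (m0 < 5)%N ->
  spline_form i (fun m => (m == m0)%:R) (fun _ => 0) x = relu3 (x - knot R l (i + m0%:Z)).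
Proof.
move=> hm; rewrite /spline_form [X in _ + X]big1 ?addr0 => [|k _]; last by rewrite mul0r.
by rewrite (@sum_indicator _ 5 (fun m => relu3 (x - knot R l (i + m%:Z)))) hm.
Qed.

Lemma spline_form_poly i p x :
  spline_form i (fun _ => 0) p x = \sum_(k < 4) p k * x ^+ k.
Proof. by rewrite /spline_form big1 ?add0r // => m _; rewrite mul0r. Qed.

End SplineForm.

Section ConfluentDividedDifferences.
Variable R : realType.
Implicit Types x : R.

Lemma near_derive1n (f h : R -> R) (t0 : R) k :
  (\forall t \near t0, f t = h t) -> derive1n k f t0 = derive1n k h t0.
Proof.
move=> H.
suff : \forall t \near t0, derive1n k f t = derive1n k h t by move/nbhs_singleton.
elim: k => [|k IH] //; move: IH => /near_join; apply: filterS => t Ht.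
by rewrite !derive1nS !derive1E; exact: near_eq_derive.
Qed.

Lemma derive1n_horner (P : {poly R}) k : derive1n k (horner P) = horner (P^`(k)).
Proof.
elim: k => [|k IH]; first by rewrite derivn0.
by rewrite derive1nS IH -derivE derivnS.
Qed.

Lemma derive1n_cst0 k : derive1n k (fun _ : R => (0 : R)) = fun _ => 0.
Proof.
elim: k => [|k IH] //; rewrite derive1nS IH.
by apply/funext => t; rewrite (derive1_cst (0 : R^o)).
Qed.

(* Coefficient of x^j t^k in (x - t)^3. *)
Definition cube_coef (k j : nat) : R :=
  if (k + j == 3)%N then (-1) ^+ k * 'C(3, k)%:R else 0.

Lemma coef_cube x k :
  ((x%:P - 'X) ^+ 3)`_k = \sum_(j < 4) cube_coef k j * x ^+ j.
Proof.
have -> : (x%:P - 'X) ^+ 3 = (x ^+ 3)%:P - (3%:R * x ^+ 2)%:P * 'X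
           + (3%:R * x)%:P * 'X ^+ 2 - 'X ^+ 3.
  by rewrite !polyCM polyC_natr; ring.
rewrite !big_ord_recr big_ord0 /= /cube_coef.
rewrite !(coefB, coefD, coefN, coefCM, coefC, coefX, coefXn).
have bin32 : 'C(3, 2) = 3%N by [].
by case: k => [|[|[|[|k]]]] /=; rewrite ?bin0 ?bin1 ?binn ?bin32; ring.
Qed.

(* At a confluent knot 0 < x, sigma(x - t) is the polynomial (x - t)^3 in t, so the
   confluent divided difference is its k-th Taylor coefficient, a cubic in x. *)
Lemma confluent_at0 k x : 0 < x ->
  derive1n k (fun t => relu3 (x - t)) 0 / (k`!)%:R = \sum_(j < 4) cube_coef k j * x ^+ j.
Proof.
move=> hx.
have near0 : \forall t \near (0 : R), relu3 (x - t) = ((x%:P - 'X) ^+ 3).[t].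
  move: (lt_nbhsl hx); apply: filterS => t ht.
  by rewrite relu3_ge0 ?subr_ge0 ?ltW // !hornerE.
rewrite (near_derive1n _ near0) derive1n_horner horner_coef0 coef_derivn addn0.
by rewrite ffactnn -[_ *+ _]mulr_natr mulfK ?pnatr_eq0 -?lt0n ?fact_gt0 // coef_cube.
Qed.

(* At a confluent knot x < 1, sigma(x - t) vanishes near t = 1. *)
Lemma confluent_at1 k x : x < 1 -> derive1n k (fun t => relu3 (x - t)) 1 = 0.
Proof.
move=> hx.
have near1 : \forall t \near (1 : R), relu3 (x - t) = (fun _ => 0) t.
  move: (lt_nbhsr hx); apply: filterS => t ht.
  by rewrite relu3_le0 // subr_le0 ltW.
by rewrite (near_derive1n _ near1) derive1n_cst0.
Qed.

End ConfluentDividedDifferences.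

Section BSplineForm.
Variable R : realType.
Variable l : nat.
Hypothesis l_gt0 : (0 < l)%N.

(* Every divided difference [t_{i+m}, ..., t_{i+m+n}] sigma(x - .) with m + n <= 4
   is a spline form on (0, 1): by the recursion of divided differences, which is
   linear, with the confluent cases handled by confluent_at0 and confluent_at1. *)
Lemma divdiff_spline_form (i : int) (n m : nat) : (m + n <= 4)%N ->
  exists c p : nat -> R, forall x : R, 0 < x < 1 ->
    divdiff (fun t => relu3 (x - t)) (knot R l) (i + m%:Z) n = spline_form l i c p x.
Proof.
elim: n m => [|n IH] m hmn.
  exists (fun m' => (m' == m)%:R), (fun _ => 0) => x _.
  by rewrite spline_form_knot //; lia.
have [c1 [p1 H1]] := IH m.+1 ltac:(lia).
have [c2 [p2 H2]] := IH m ltac:(lia).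
rewrite /=; set a := i + m%:Z.
case: eqP => E.
  have [->|->] := knot_confluent l_gt0 (ltn0Sn n) E.
    exists (fun _ => 0), (cube_coef R n.+1) => x /andP[x_gt0 _].
    by rewrite -derive1nS spline_form_poly confluent_at0.
  exists (fun _ => 0), (fun _ => 0) => x /andP[_ x_lt1].
  rewrite -derive1nS confluent_at1 // mul0r spline_form_poly big1 // => k _.
  by rewrite mul0r.
set del := knot R l (a + n.+1%:Z) - knot R l a.
exists (fun m => del^-1 * c1 m + (- del^-1) * c2 m),
       (fun k => del^-1 * p1 k + (- del^-1) * p2 k) => x hx.
rewrite spline_formD -(H1 x hx) -(H2 x hx).
have -> : a + 1 = i + m.+1%:Z by rewrite /a -addrA -[in RHS](addn1 m) PoszD.
by rewrite /del; ring.
Qed.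

Lemma continuous_spline_form (i : int) (c p : nat -> R) :
  continuous (spline_form l i c p).
Proof.
have cst_mul (f : R -> R) (b : R) : continuous f -> continuous (fun z => b * f z).
  by move=> hf z; apply: continuousM; [exact: cvg_cst | exact: hf].
move=> y; apply: continuousD.
  apply: (@continuous_big _ _ +%R 0 xpredT add_continuous _ _
     (fun (m : 'I_5) (z : R) => c m * relu3 (z - knot R l (i + (m : nat)%:Z)))) => m _.
  apply: cst_mul => z.
  apply: (@continuous_comp _ _ _ (fun z : R => z - knot R l (i + (m : nat)%:Z)) (@relu3 R)).
    by apply: continuousB; [exact: cvg_id | exact: cvg_cst].
  exact: continuous_relu3.
apply: (@continuous_big _ _ +%R 0 xpredT add_continuous _ _
   (fun (k : 'I_4) (z : R) => p k * z ^+ k)) => k _.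
by apply: cst_mul; exact: exprn_continuous.
Qed.

Lemma lim_near_eq (F : set_system R) {FF : ProperFilter F} (f g : R -> R) (a : R) :
  (g @ F --> g a)%classic -> (\forall y \near F, f y = g y) -> lim (f @ F)%classic = g a.
Proof.
move=> g_cvg f_eq; apply: cvg_lim => //.
by apply: cvg_trans g_cvg; apply: near_eq_cvg; apply: filterS f_eq.
Qed.

Lemma bspline4_spline_form (i : int) :
  exists c p : nat -> R, forall x : R, 0 <= x <= 1 -> bspline4 l i x = spline_form l i c p x.
Proof.
have [c0 [p0 H0]] := @divdiff_spline_form i 4 0 isT.
set ka := knot R l (i + 4) - knot R l i.
exists (fun m => ka * c0 m), (fun k => ka * p0 k).
have Hraw (y : R) : 0 < y < 1 -> bspline4_raw l i y =
    spline_form l i (fun m => ka * c0 m) (fun k => ka * p0 k) y.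
  by move=> hy; rewrite spline_formZ -(H0 y hy) addr0.
move=> x /andP[hx0 hx1]; rewrite /bspline4.
case: eqP => [->|/eqP x0].
  apply: lim_near_eq (cvg_at_right_filter (@continuous_spline_form i _ _ 0)) _.
  near=> y; rewrite Hraw //; apply/andP; split.
    by near: y; exact: nbhs_right_gt.
  by near: y; exact: nbhs_right_lt.
case: eqP => [->|/eqP x1].
  apply: lim_near_eq (cvg_at_left_filter (@continuous_spline_form i _ _ 1)) _.
  near=> y; rewrite Hraw //; apply/andP; split.
    by near: y; exact: nbhs_left_gt.
  by near: y; exact: nbhs_left_lt.
by apply: Hraw; rewrite !lt_def x0 eq_sym x1 hx0 hx1.
Unshelve. all: by end_near.
Qed.

End BSplineForm.

Section SplineLayer.
Variable R : realType.
Variable l : nat.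

(* Weights, output bias and input shifts of nine neurons computing a spline form:
   the five truncated powers sigma(x - t_{i+q}), q < 5, and sigma(x + q - 5),
   5 <= q < 9, which equal (x + q - 5)^3 for x >= 0 and so span, with a constant,
   all cubic polynomials. *)
Definition spline_weight (c p : nat -> R) (q : nat) : R :=
  if (q < 5)%N then c q
  else if q == 5%N then p 3%N - p 2%N / 2%:R + p 1%N / 4%:R
  else if q == 6%N then 2%:R / 3%:R * p 2%N - 7%:R / 12%:R * p 1%N
  else if q == 7%N then - p 2%N / 6%:R + 5%:R / 12%:R * p 1%N
  else - p 1%N / 12%:R.

Definition spline_bias (p : nat -> R) : R := p 0%N + 2%:R / 3%:R * p 2%N - p 1%N / 2%:R.

Definition spline_shift (i : int) (q : nat) : R :=
  if (q < 5)%N then - knot R l (i + q%:Z) else (q - 5)%:R.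

Lemma spline_form_relu3 (i : int) (c p : nat -> R) (x : R) : 0 <= x ->
  \sum_(q < 9) spline_weight c p q * relu3 (x + spline_shift i q) + spline_bias p
  = spline_form l i c p x.
Proof.
move=> hx.
have cube_shift (n : nat) : relu3 (x + n%:R) = (x + n%:R) ^+ 3.
  by rewrite relu3_ge0 // addr_ge0.
rewrite /spline_form !big_ord_recr !big_ord0 /= /spline_weight /spline_shift /spline_bias /=.
rewrite !cube_shift subnn (_ : (6 - 5)%N = 1%N) // (_ : (7 - 5)%N = 2%N) //.
rewrite (_ : (8 - 5)%N = 3%N) //.
have n2 : (2%:R : R) != 0 by rewrite pnatr_eq0.
have n3 : (3%:R : R) != 0 by rewrite pnatr_eq0.
have n4 : (4%:R : R) != 0 by rewrite pnatr_eq0.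
have n6 : (6%:R : R) != 0 by rewrite pnatr_eq0.
have n12 : (12%:R : R) != 0 by rewrite pnatr_eq0.
by field.
Qed.

Variable d' : nat.
Local Notation d := d'.+1.
Variable ii : 'I_d -> int.
Variable cp : 'I_d -> (nat -> R) * (nat -> R).

(* The first layer: neuron q * d + s is the q-th spline neuron of coordinate s; the
   output map produces the d spline forms with coefficients cp s. *)
Definition spline_in : 'M[R]_(9 * d, d) := \matrix_(k, j) ((j : nat) == (k %% d)%N)%:R.
Definition spline_in_bias : 'cV[R]_(9 * d) :=
  \col_k spline_shift (ii (inord (k %% d))) (k %/ d).
Definition spline_out : 'M[R]_(d, 9 * d) :=
  \matrix_(s, k) (((k %% d)%N == s)%:R * spline_weight (cp s).1 (cp s).2 (k %/ d)).
Definition spline_out_bias : 'cV[R]_d := \col_s spline_bias (cp s).2.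

Lemma spline_layer (x : 'I_d -> R) : (forall j, 0 <= x j) -> forall s : 'I_d,
  (spline_out *m (\col_k relu3 ((spline_in *m (\col_j x j) + spline_in_bias) k 0))
    + spline_out_bias) s 0 = spline_form l (ii s) (cp s).1 (cp s).2 (x s).
Proof.
move=> x_ge0 s.
have input (k : 'I_(9 * d)) : (spline_in *m \col_j x j + spline_in_bias) k 0
    = x (inord (k %% d)) + spline_shift (ii (inord (k %% d))) (k %/ d).
  rewrite !mxE; congr (_ + _).
  under eq_bigr => j _ do rewrite !mxE -{2}(inord_val j).
  by rewrite (@sum_indicator _ d (fun n => x (inord n))) ltn_pmod.
rewrite !mxE -(spline_form_relu3 (ii s) _ _ (x_ge0 s)); congr (_ + _).
under eq_bigr => k _ do rewrite [in X in _ * X]mxE input mxE -mulrA.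
rewrite (@sum_block_at _ 9 d (fun q j => spline_weight (cp s).1 (cp s).2 q *
  relu3 (x (inord j) + spline_shift (ii (inord j)) q))) //.
by under eq_bigr => q _ do rewrite inord_val.
Qed.

End SplineLayer.

Section BSplineNet.
Variable R : realType.

Definition bspline_net (l d' e : nat) (ii : 'I_d'.+1 -> int)
    (cp : 'I_d'.+1 -> (nat -> R) * (nat -> R)) : net R d'.+1 1 :=
  Hidden (spline_in R d') (spline_in_bias R l ii) (fun _ => @relu3 R)
    (product_net d' e (spline_out cp) (spline_out_bias cp)).

Lemma bspline_net_eval l d' e ii cp (x : 'I_d'.+1 -> R) :
  (d'.+1 <= 2 ^ e)%N -> (forall j, 0 <= x j) ->
  net_eval (bspline_net l e ii cp) (\col_j x j) 0 0
  = \prod_(j < d'.+1) spline_form l (ii j) (cp j).1 (cp j).2 (x j).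
Proof.
move=> d_le x_ge0 /=.
rewrite (@product_net_eval _ _ _ _ _ _ _ (fun n => spline_form l (ii (inord n))
          (cp (inord n)).1 (cp (inord n)).2 (x (inord n)))).
  by rewrite tree_prod_full //; apply: eq_bigr => j _; rewrite inord_val.
by move=> s; rewrite spline_layer // inord_val.
Qed.

End BSplineNet.

Theorem mainTheorem8 (R : realType) :
  ((forall x : R, 0 <= x ->
      x ^+ 2 = - (6%:R)^-1 * (relu3 (x + 2) - 4%:R * relu3 (x + 1)
                               + 3%:R * relu3 x - 4%:R))
   /\ (forall x : R, 0 <= x ->
      x = - (12%:R)^-1 * (relu3 (x + 3) - 5%:R * relu3 (x + 2)
                          + 7%:R * relu3 (x + 1) - 3%:R * relu3 x + 6%:R))
   /\ (forall x y : R, 0 <= x -> 0 <= y ->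
      x * y = - (12%:R)^-1 *
        (relu3 (x + y + 2) - 4%:R * relu3 (x + y + 1) + 3%:R * relu3 (x + y)
         - relu3 (x + 2) + 4%:R * relu3 (x + 1) - 3%:R * relu3 x
         - relu3 (y + 2) + 4%:R * relu3 (y + 1) - 3%:R * relu3 y + 4%:R)))
  /\
  (forall (l d : nat) (ii : 'I_d -> int),
     (0 < l)%N -> (0 < d)%N ->
     (forall j, -3 <= ii j <= l%:Z - 1) ->
     exists N : net R d 1,
       net_depth N = (up_log 2 d + 2)%N /\
       net_width_le (11 * d) N /\
       net_acts_in (fun rho => rho = @relu3 R) N /\
       forall x : 'I_d -> R, (forall j, 0 <= x j <= 1) ->
         net_eval N (\col_j x j) 0 0 = bspline4_multi l ii x).
Proof.
split; first by do ![split]; [exact: relu3_square | exact: relu3_identity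
                              | exact: relu3_product_nonneg].
move=> l [//|d'] ii l_gt0 _ _.
have spline_coefs (j : 'I_d'.+1) : exists cp : (nat -> R) * (nat -> R),
    forall x, 0 <= x <= 1 -> bspline4 l (ii j) x = spline_form l (ii j) cp.1 cp.2 x.
  by have [c [p H]] := bspline4_spline_form R l_gt0 (ii j); exists (c, p).
have [cp Hcp] := choice spline_coefs.
exists (bspline_net l (up_log 2 d'.+1) ii cp).
split; first by rewrite /= product_net_depth addn2.
split; first by split; [lia | apply: product_net_width; lia].
split; first by split => //; exact: product_net_acts.
move=> x x01; rewrite bspline_net_eval ?up_logP //; last by move=> j; case/andP: (x01 j).
by apply: eq_bigr => j _; rewrite Hcp.
Qed.
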